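(* Let $L$ be a complete finite-dimensional Lie algebra over any field. Then there exists a Lie algebra $H$ with $H^2\cong L$ if and only if $L$ is perfect, i.e. $L^2=L$.
   Context: A Lie algebra $L$ is complete if $Z(L)=0$ and every derivation of $L$ is inner, i.e. $\mathrm{Der}(L)=\mathrm{ad}(L)$. $H^2=[H,H]$ denotes the derived algebra. *)

From HB Require Import structures.
From mathcomp Require Import all_boot all_order all_algebra.
Set Implicit Arguments. Unset Strict Implicit. Unset Printing Implicit Defensive.
Import GRing.Theory.
Local Open Scope ring_scope.

Definition is_lie (F : fieldType) (V : lmodType F) (b : V -> V -> V) : Prop :=
  [/\ (forall (a : F) (x y z : V), b (a *: x + y) z = a *: b x z + b y z),
      (forall (a : F) (x y z : V), b z (a *: x + y) = a *: b z x + b z y),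
      (forall x : V, b x x = 0) &
      (forall x y z : V, b x (b y z) + b y (b z x) + b z (b x y) = 0)].

Definition in_derived (F : fieldType) (V : lmodType F) (b : V -> V -> V) (x : V) : Prop :=
  exists s : seq (V * V), x = \sum_(p <- s) b p.1 p.2.

Definition perfect (F : fieldType) (V : lmodType F) (b : V -> V -> V) : Prop :=
  forall x : V, in_derived b x.

Definition is_linear_map (F : fieldType) (U V : lmodType F) (f : U -> V) : Prop :=
  forall (a : F) (x y : U), f (a *: x + y) = a *: f x + f y.

Definition is_derivation (F : fieldType) (V : lmodType F) (b : V -> V -> V)
  (D : V -> V) : Prop :=
  is_linear_map D /\ forall x y : V, D (b x y) = b (D x) y + b x (D y).

Definition complete_lie (F : fieldType) (V : lmodType F) (b : V -> V -> V) : Prop :=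
  (forall z : V, (forall x : V, b z x = 0) -> z = 0) /\
  (forall D : V -> V, is_derivation b D -> exists a : V, forall x : V, D x = b a x).

(* H^2 is isomorphic (as Lie algebra) to L: there is an injective linear
   bracket-preserving map L -> H whose image is exactly H^2. *)
Definition derived_iso (F : fieldType) (H L : lmodType F)
  (bH : H -> H -> H) (bL : L -> L -> L) : Prop :=
  exists f : L -> H,
    [/\ is_linear_map f, injective f,
        (forall x y : L, f (bL x y) = bH (f x) (f y)) &
        (forall h : H, in_derived bH h <-> exists x : L, h = f x)].

From HB Require Import structures.
From mathcomp Require Import all_boot all_order all_algebra.
Import GRing.Theory.
Local Open Scope ring_scope.
Set Implicit Arguments. Unset Strict Implicit.

(* Let f : L -> H identify L with H^2. Since H^2 is an ideal, each ad h
   restricts to a derivation of L, which is inner: ad h o f = f o ad a. Hence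
   H = f(L) + C, where C centralizes f(L). Cross brackets vanish, so
   H^2 = f(L^2) + [C,C]. But [C,C] is contained both in C and in H^2 = f(L),
   and f(L) meets C only in f(Z(L)) = 0; thus f(L) = H^2 = f(L^2) and L = L^2.
   The converse is trivial: take H = L. *)

Section LieBracket.

Variables (F : fieldType) (V : lmodType F) (b : V -> V -> V).
Hypothesis lieV : is_lie b.

Lemma lie_addl x y z : b (x + y) z = b x z + b y z.
Proof. by case: lieV => linl _ _ _; have := linl 1 x y z; rewrite !scale1r. Qed.

Lemma lie_addr x y z : b z (x + y) = b z x + b z y.
Proof. by case: lieV => _ linr _ _; have := linr 1 x y z; rewrite !scale1r. Qed.

Lemma lie_subl x y z : b (x - y) z = b x z - b y z.
Proof.
case: lieV => linl _ _ _; have := linl (-1) y x z; rewrite !scaleN1r.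
by rewrite addrC [- _ + _]addrC.
Qed.

Lemma lie_subr x y z : b z (x - y) = b z x - b z y.
Proof.
case: lieV => _ linr _ _; have := linr (-1) y x z; rewrite !scaleN1r.
by rewrite addrC [- _ + _]addrC.
Qed.

Lemma lie0l z : b 0 z = 0.
Proof. by have := lie_subl z z z; rewrite !subrr. Qed.

Lemma lie0r z : b z 0 = 0.
Proof. by have := lie_subr z z z; rewrite !subrr. Qed.

Lemma lie_oppr x z : b z (- x) = - b z x.
Proof. by have := lie_subr 0 x z; rewrite sub0r lie0r sub0r. Qed.

Lemma lie_anticomm x y : b x y = - b y x.
Proof.
case: lieV => _ _ alt _; apply/eqP; rewrite -addr_eq0.
by have := alt (x + y); rewrite lie_addl !lie_addr !alt add0r addr0 => ->.
Qed.

Lemma lie_ad_derivation h x y : b h (b x y) = b (b h x) y + b x (b h y).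
Proof.
case: lieV => _ _ _ jacobi; have := jacobi h x y.
rewrite (lie_anticomm y h) lie_oppr (lie_anticomm y (b h x)) => /eqP.
by rewrite -addrA addr_eq0 => /eqP ->; rewrite opprD !opprK addrC.
Qed.

Lemma lie_centralizer_closed c1 c2 z :
  b c1 z = 0 -> b c2 z = 0 -> b (b c1 c2) z = 0.
Proof.
case: lieV => _ _ _ jacobi c1z c2z; have := jacobi c1 c2 z.
rewrite c2z lie0r add0r (lie_anticomm z c1) c1z oppr0 lie0r add0r => e.
by rewrite lie_anticomm e oppr0.
Qed.

End LieBracket.

Section LinearMap.

Variables (F : fieldType) (U V : lmodType F) (f : U -> V).
Hypothesis linf : is_linear_map f.

Lemma linear_map0 : f 0 = 0.
Proof. by have := linf (-1) 0 0; rewrite !scaleN1r oppr0 addr0 addNr. Qed.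

Lemma linear_mapD x y : f (x + y) = f x + f y.
Proof. by have := linf 1 x y; rewrite !scale1r. Qed.

Lemma linear_mapB x y : f (x - y) = f x - f y.
Proof.
have := linf (-1) y x; rewrite !scaleN1r.
by rewrite addrC [- _ + _]addrC.
Qed.

End LinearMap.

Section IdealEmbedding.

Variables (F : fieldType) (H L : lmodType F).
Variables (bH : H -> H -> H) (bL : L -> L -> L) (f : L -> H).
Hypotheses (lieH : is_lie bH) (linf : is_linear_map f) (injf : injective f).
Hypothesis f_bracket : forall x y, f (bL x y) = bH (f x) (f y).

Let centralizes (c : H) := forall z, bH c (f z) = 0.

Lemma ideal_embedding_decomposition :
    (forall h z, exists x, bH h (f z) = f x) ->
    (forall D, is_derivation bL D -> exists a, forall x, D x = bL a x) ->
  forall h, exists a, exists2 c, h = f a + c & centralizes c.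
Proof.
move=> ideal inner h.
have ex z : exists x, bH h (f z) == f x by have [x ->] := ideal h z; exists x.
pose D z := xchoose (ex z).
have fD z : f (D z) = bH h (f z) by rewrite (eqP (xchooseP (ex z))).
have [a aD] : exists a, forall x, D x = bL a x.
  apply: inner; split=> [c x y | x y]; apply: injf.
    by rewrite linf !fD linf; case: lieH => _ linr _ _; rewrite linr.
  by rewrite (linear_mapD linf) !f_bracket !fD f_bracket (lie_ad_derivation lieH).
exists a, (h - f a); first by rewrite addrC subrK.
by move=> z; rewrite (lie_subl lieH) -fD aD f_bracket subrr.
Qed.

Lemma derived_decomposition :
    (forall h, exists a, exists2 c, h = f a + c & centralizes c) ->
  forall s : seq (H * H), exists t : seq (L * L), exists2 c,
    \sum_(p <- s) bH p.1 p.2 = f (\sum_(q <- t) bL q.1 q.2) + c & centralizes c.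
Proof.
move=> dec; elim=> [|[h1 h2] s [t [c e cC]]].
  exists [::], 0; first by rewrite !big_nil (linear_map0 linf) addr0.
  by move=> z; apply: lie0l.
have [a1 [c1 -> c1C]] := dec h1; have [a2 [c2 -> c2C]] := dec h2.
exists ((a1, a2) :: t), (c + bH c1 c2); last first.
  move=> z; rewrite (lie_addl lieH) cC add0r.
  exact: (lie_centralizer_closed lieH (c1C z) (c2C z)).
rewrite !big_cons /= e (linear_mapD linf) f_bracket (lie_addl lieH) !(lie_addr lieH) c1C.
rewrite (lie_anticomm lieH (f a1) c2) c2C oppr0 add0r !addr0 addrACA.
by congr (_ + _); rewrite addrC.
Qed.

End IdealEmbedding.

Theorem corollary2p2 (F : fieldType) (L : vectType F) (bL : L -> L -> L) :
  is_lie bL -> complete_lie bL ->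
  ((exists (H : lmodType F) (bH : H -> H -> H), is_lie bH /\ derived_iso bH bL)
   <-> perfect bL).
Proof.
move=> lieL [centerL innerL]; split=> [|perfL]; last first.
  exists L, bL; split=> //; exists id; split=> // h.
  by split=> [_|_]; [exists h | apply: perfL].
move=> [H [bH [lieH [f [linf injf f_bracket imf]]]]].
have ideal h z : exists x, bH h (f z) = f x.
  by apply/imf; exists [:: (h, f z)]; rewrite big_seq1.
have dec := ideal_embedding_decomposition lieH linf injf f_bracket ideal innerL.
move=> x; have [s fx] : in_derived bH (f x) by apply/imf; exists x.
have [t [c e cC]] := derived_decomposition lieH linf f_bracket dec s.
pose y := x - \sum_(q <- t) bL q.1 q.2.
have fy : f y = c by rewrite (linear_mapB linf) fx e addrC addKr.
suff /eqP : y = 0 by rewrite subr_eq0 => /eqP ->; exists t.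
by apply: centerL => z; apply: injf; rewrite f_bracket fy cC (linear_map0 linf).
Qed.
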